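(* Let $(K,\mathrm{val})$ be a valued field whose residue class field $F$ has characteristic two, and assume every strict unit admits a square root in $K$. Let $A$ be a subring with $B\subseteq A\subseteq K$. Then every $x\in K^\times\setminus B^\times$ can be written as $x=u^2+v^2$ with $u,v\in K$ and $\mathrm{val}(u)=\mathrm{val}(v)=\min\{e,\mathrm{val}(x)\}$. Moreover, if $x\in A$, then $u$ and $v$ can be chosen in $A$.
   Context: Let $(G,\le)$ be a totally ordered abelian group written multiplicatively with identity $e$. Let $(K,\mathrm{val})$ be a valued field with surjective valuation $\mathrm{val}:K\to G\cup\{\infty\}$, valuation ring $B=\{x:\mathrm{val}(x)\ge e\}$ (so $B^\times=\{x:\mathrm{val}(x)=e\}$), residue map $\pi:B\to F$, residue field $F$. A strict unit is $x\in B^\times$ with $\pi(x)=1$. *)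

From HB Require Import structures.
From mathcomp Require Import all_boot all_order all_algebra.
Set Implicit Arguments. Unset Strict Implicit. Unset Printing Implicit Defensive.
Import Order.TTheory GRing.Theory Num.Theory.
Local Open Scope ring_scope.

Definition is_ordered_abgroup (d : Order.disp_t) (G : orderType d)
    (gmul : G -> G -> G) (e : G) (ginv : G -> G) : Prop :=
  [/\ (forall a b c, gmul a (gmul b c) = gmul (gmul a b) c),
      (forall a b, gmul a b = gmul b a),
      (forall a, gmul e a = a),
      (forall a, gmul (ginv a) a = e) &
      (forall a b c, (a <= b)%O -> (gmul c a <= gmul c b)%O)].

(* G ∪ {∞} is modelled by [option G], with [None] = ∞ (the top element). *)
Definition ole (d : Order.disp_t) (G : orderType d) (a b : option G) : Prop :=
  match a, b with
  | _, None => True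
  | None, Some _ => False
  | Some x, Some y => (x <= y)%O
  end.

Definition omul (d : Order.disp_t) (G : orderType d) (gmul : G -> G -> G)
    (a b : option G) : option G :=
  match a, b with
  | Some x, Some y => Some (gmul x y)
  | _, _ => None
  end.

Definition omin (d : Order.disp_t) (G : orderType d) (a b : option G) : option G :=
  match a, b with
  | None, _ => b
  | _, None => a
  | Some x, Some y => Some (Order.min x y)
  end.

Definition is_valuation (K : fieldType) (d : Order.disp_t) (G : orderType d)
    (gmul : G -> G -> G) (val : K -> option G) : Prop :=
  [/\ (forall x, val x = None <-> x = 0),
      (forall x y, val (x * y) = omul gmul (val x) (val y)),
      (forall x y, ole (omin (val x) (val y)) (val (x + y))) &
      (forall g : G, exists x, val x = Some g)].

Definition in_B (K : fieldType) (d : Order.disp_t) (G : orderType d)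
    (e : G) (val : K -> option G) (x : K) : Prop := ole (Some e) (val x).

Definition in_Bunit (K : fieldType) (d : Order.disp_t) (G : orderType d)
    (e : G) (val : K -> option G) (x : K) : Prop := val x = Some e.

(* [pi] (given as a total function on K, only its restriction to B matters)
   is a residue map B -> F: a surjective ring morphism on B whose kernel is
   the maximal ideal {x : val x > e}. *)
Definition is_residue_map (K : fieldType) (d : Order.disp_t) (G : orderType d)
    (e : G) (val : K -> option G) (F : fieldType) (pi : K -> F) : Prop :=
  [/\ pi 1 = 1,
      (forall x y, in_B e val x -> in_B e val y -> pi (x + y) = pi x + pi y),
      (forall x y, in_B e val x -> in_B e val y -> pi (x * y) = pi x * pi y),
      (forall x, in_B e val x -> (pi x = 0 <-> val x <> Some e)) &
      (forall c : F, exists2 x, in_B e val x & pi x = c)].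

Definition strict_unit (K : fieldType) (d : Order.disp_t) (G : orderType d)
    (e : G) (val : K -> option G) (F : fieldType) (pi : K -> F) (x : K) : Prop :=
  in_Bunit e val x /\ pi x = 1.

From HB Require Import structures.
From mathcomp Require Import all_boot all_order all_algebra.
Import Order.TTheory GRing.Theory Num.Theory.
Set Implicit Arguments. Unset Strict Implicit. Unset Printing Implicit Defensive.
Local Open Scope ring_scope.

(* Let x be a nonzero element of K that is not a unit of the valuation ring B.
   - If val x > e, then x lies in the maximal ideal m of B, so x - 1 is a
     strict unit (in characteristic two, pi (x - 1) = pi x + 1 = 1); writing
     x - 1 = b^2 gives x = 1^2 + b^2 with val 1 = val b = e.
   - If val x < e, then x^-1 lies in m, so x^-1 - 1 = b^2 for a unit b, and
     x = x^2 + (x b)^2 with val (x b) = val x.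
   In both cases both summands have valuation min(e, val x); they lie in any
   ring A with B <= A <= K that contains x, since 1 and b lie in B. *)

Section OrderedAbelianGroup.
Variables (d : Order.disp_t) (G : orderType d).
Variables (gmul : G -> G -> G) (e : G) (ginv : G -> G).
Hypothesis HG : is_ordered_abgroup gmul e ginv.

Lemma gmule (a : G) : gmul a e = a.
Proof. by case: HG => _ gC g1 _ _; rewrite gC g1. Qed.

Lemma gsqr_eq_e (h : G) : gmul h h = e -> h = e.
Proof.
case: HG => _ _ _ _ gmono hh; case: (ltgtP h e) => // H;
  by have := gmono _ _ h (ltW H); rewrite hh gmule leNgt H.
Qed.

Lemma ginv_gt_e (g h : G) : gmul g h = e -> (g < e)%O -> (e < h)%O.
Proof.
case: HG => _ _ _ _ gmono gh ltge; case: (ltgtP h e) => // H.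
- by have := gmono _ _ g (ltW H); rewrite gh gmule leNgt ltge.
- by move: gh; rewrite H gmule => geE; rewrite geE ltxx in ltge.
Qed.

End OrderedAbelianGroup.

Section Valuation.
Variables (d : Order.disp_t) (G : orderType d).
Variables (gmul : G -> G -> G) (e : G) (ginv : G -> G).
Hypothesis HG : is_ordered_abgroup gmul e ginv.
Variables (K : fieldType) (val : K -> option G).
Hypothesis Hval : is_valuation gmul val.

Lemma val_neq0 (y : K) : y != 0 -> exists h, val y = Some h.
Proof.
case: Hval => v0 _ _ _ y0; case E: (val y) => [h|]; first by exists h.
by move/v0: E y0 => ->; rewrite eqxx.
Qed.

Lemma val0 : val 0 = None.
Proof. by case: Hval => v0 _ _ _; apply/v0. Qed.

Lemma val1 : val 1 = Some e.
Proof.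
case: HG => gA _ g1 gV _; case: Hval => _ vM _ _.
have [h E] := val_neq0 (oner_neq0 K).
have := vM 1 1; rewrite mulr1 E /= => -[hh].
have : gmul (ginv h) (gmul h h) = gmul (ginv h) h by rewrite -hh.
by rewrite gA gV g1 => ->.
Qed.

Lemma val_sqr_unit (y : K) : val (y ^+ 2) = Some e -> val y = Some e.
Proof.
case: Hval => _ vM _ _ Hy.
have y0 : y != 0 by apply: contra_eqN Hy => /eqP ->; rewrite expr0n val0.
have [h E] := val_neq0 y0.
by move: Hy; rewrite expr2 vM E => -[/(gsqr_eq_e HG) ->].
Qed.

Lemma valN1 : val (-1) = Some e.
Proof. by apply: val_sqr_unit; rewrite sqrrN expr1n val1. Qed.

Lemma in_B0 : in_B e val 0.
Proof. by rewrite /in_B val0. Qed.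

Lemma in_B1 : in_B e val 1.
Proof. by rewrite /in_B val1 /=. Qed.

Lemma in_BN1 : in_B e val (-1).
Proof. by rewrite /in_B valN1 /=. Qed.

Lemma in_B_add (y z : K) : in_B e val y -> in_B e val z -> in_B e val (y + z).
Proof.
rewrite /in_B; case: Hval => _ _ vD _; have := vD y z.
case: (val y) => [a|]; case: (val z) => [b|]; case: (val (y + z)) => [c|] //=.
- by move=> H ha hb; apply: le_trans H; rewrite le_min ha hb.
- by move=> H ha _; apply: le_trans H.
- by move=> H _ hb; apply: le_trans H.
Qed.

Definition in_maximal (y : K) : Prop := in_B e val y /\ val y <> Some e.

Lemma inv_in_maximal (x : K) (g : G) : val x = Some g -> (g < e)%O ->
  in_maximal x^-1.
Proof.
case: Hval => _ vM _ _ Ex ltge.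
have x0 : x != 0 by apply: contra_eq_neq Ex => ->; rewrite val0.
have [h Exi] := val_neq0 (invr_neq0 x0).
have gh : gmul g h = e by have := vM x x^-1; rewrite mulfV // val1 Ex Exi => -[].
have lteh := ginv_gt_e HG gh ltge.
rewrite /in_maximal /in_B Exi /=; split; first exact: ltW.
by move=> -[he]; rewrite he ltxx in lteh.
Qed.

End Valuation.

Section ResidueCharacteristicTwo.
Variables (d : Order.disp_t) (G : orderType d).
Variables (gmul : G -> G -> G) (e : G) (ginv : G -> G).
Hypothesis HG : is_ordered_abgroup gmul e ginv.
Variables (K : fieldType) (val : K -> option G).
Hypothesis Hval : is_valuation gmul val.
Variables (F : fieldType) (pi : K -> F).
Hypothesis Hpi : is_residue_map e val pi.
Hypothesis Hchar : 2%N \in [pchar F].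

Lemma piN1 : pi (-1) = 1.
Proof.
case: Hpi => p1 pD _ _ _.
have pi0 : pi 0 = 0.
  by have := pD 0 0 (in_B0 e Hval) (in_B0 e Hval); rewrite addr0 -{1}(addr0 (pi 0)) => /addrI.
have two0 : (1 + 1 : F) = 0 by move: (pcharf0 Hchar); rewrite mulr2n.
have := pD 1 (-1) (in_B1 HG Hval) (in_BN1 HG Hval); rewrite subrr pi0 p1 => /esym/eqP.
rewrite addr_eq0 => /eqP H; rewrite -[pi (-1)]opprK -H.
by apply/eqP; rewrite eq_sym -addr_eq0 two0.
Qed.

Lemma maximal_sub1_strict_unit (y : K) :
  in_maximal e val y -> strict_unit e val pi (y - 1).
Proof.
case: Hpi => _ pD _ p0 _ [yB yM].
have piy1 : pi (y - 1) = 1.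
  by rewrite (pD _ _ yB (in_BN1 HG Hval)) (proj2 (p0 _ yB) yM) piN1 add0r.
split=> //; case: (eqVneq (val (y - 1)) (Some e)) => // /eqP H.
have /(p0 _ (in_B_add Hval yB (in_BN1 HG Hval))) := H.
by rewrite piy1 => /eqP; rewrite oner_eq0.
Qed.

Hypothesis Hsqrt : forall x : K, strict_unit e val pi x -> exists y : K, y ^+ 2 = x.

Lemma maximal_sub1_square (y : K) : in_maximal e val y ->
  exists b, b ^+ 2 = y - 1 /\ val b = Some e.
Proof.
move=> yM; have su := maximal_sub1_strict_unit yM.
have [b Hb] := Hsqrt su; exists b; split=> //.
by apply: (val_sqr_unit HG Hval); rewrite Hb; case: su.
Qed.

Lemma two_squares_large (x : K) (g : G) : val x = Some g -> (e < g)%O ->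
  exists b, x = 1 ^+ 2 + b ^+ 2 /\ val b = Some e.
Proof.
move=> Ex lteg; have xM : in_maximal e val x.
  split; first by rewrite /in_B Ex /= ltW.
  by rewrite Ex => -[ge]; rewrite ge ltxx in lteg.
have [b [Hb vb]] := maximal_sub1_square xM.
by exists b; rewrite Hb expr1n addrC subrK.
Qed.

Lemma two_squares_small (x : K) (g : G) : val x = Some g -> (g < e)%O ->
  exists b, [/\ x = x ^+ 2 + (x * b) ^+ 2, val b = Some e & val (x * b) = Some g].
Proof.
move=> Ex ltge; have [b [Hb vb]] := maximal_sub1_square (inv_in_maximal HG Hval Ex ltge).
have x0 : x != 0 by apply: contra_eq_neq Ex => ->; rewrite (val0 Hval).
exists b; split=> //.
- by rewrite exprMn Hb mulrBr mulr1 addrC subrK expr2 mulfK.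
- by case: Hval => _ vM _ _; rewrite vM Ex vb /= (gmule HG).
Qed.

End ResidueCharacteristicTwo.

Theorem mainTheorem18
  (d : Order.disp_t) (G : orderType d)
  (gmul : G -> G -> G) (e : G) (ginv : G -> G)
  (HG : is_ordered_abgroup gmul e ginv)
  (K : fieldType) (val : K -> option G)
  (Hval : is_valuation gmul val)
  (F : fieldType) (pi : K -> F)
  (Hpi : is_residue_map e val pi)
  (Hchar : 2%N \in [pchar F])
  (Hsqrt : forall x : K, strict_unit e val pi x -> exists y : K, y ^+ 2 = x)
  (A : {pred K})
  (HA : subring_closed A)
  (HBA : forall x : K, in_B e val x -> x \in A) :
  forall x : K, x != 0 -> ~ in_Bunit e val x ->
    (exists u v : K, x = u ^+ 2 + v ^+ 2 /\
        val u = omin (Some e) (val x) /\ val v = omin (Some e) (val x)) /\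
    (x \in A -> exists u v : K, [/\ u \in A, v \in A, x = u ^+ 2 + v ^+ 2,
        val u = omin (Some e) (val x) & val v = omin (Some e) (val x)]).
Proof.
move=> x x0 xnu; have [g Ex] := val_neq0 Hval x0; rewrite Ex /=.
have unitA (b : K) : val b = Some e -> b \in A.
  by move=> vb; apply: HBA; rewrite /in_B vb /=.
case: (ltgtP g e) => [ltge|lteg|ge]; last by case: xnu; rewrite /in_Bunit Ex ge.
- have [b [eqx vb vxb]] := two_squares_small HG Hval Hpi Hchar Hsqrt Ex ltge.
  split; first by exists x, (x * b).
  move=> xA; exists x, (x * b); split=> //.
  by case: HA => _ _ AM; apply: AM => //; apply: unitA.
- have [b [eqx vb]] := two_squares_large HG Hval Hpi Hchar Hsqrt Ex lteg.
  have v1 := val1 HG Hval.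
  split; first by exists 1, b; split; [exact: eqx | split].
  move=> _; exists 1, b.
  by split; [exact: unitA | exact: unitA | exact: eqx | exact: v1 | exact: vb].
Qed.
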